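(* Let $N\ge1$ and $n\ge1$ be integers, $\phi>0$, $L>0$, and $0<\eta_0\le\eta_1\le\dots\le\eta_N$. For $t\in[N]$ let $a_t\in\mathbb{R}^n$ with $\|a_t\|_2\le L$, and for $t\in\{0,1,\dots,N\}$ define $A_t=\eta_tI+\phi\sum_{\tau=1}^{t}a_\tau a_\tau^\top$. Let $d_1,\dots,d_N\in\{0,1,2,\dots\}$ be delays, $m_t=\{\tau\in[t-1]:\tau+d_\tau\ge t\}$, and $d_{\max}^{\le N}=\max_{\tau\le N}\min\{d_\tau,N-\tau\}$. Then $$\sum_{t=1}^N\|a_t\|_{A_{t-1}^{-1}}\left(\sum_{\tau\in m_t}\|a_\tau\|_{A_{t-1}^{-1}}\right)\le\frac{2n\,d_{\max}^{\le N}}{\phi}\left(\frac{\phi L^2}{\eta_0}+1\right)\ln\left(1+\frac{\phi L^2N}{\eta_0 n}\right),$$ and $$\sum_{t=1}^N\|a_t\|_{A_t^{-1}}\left(\sum_{\tau\in m_t}\|a_\tau\|_{A_t^{-1}}\right)\le\frac{2n\,d_{\max}^{\le N}}{\phi}\ln\left(1+\frac{\phi L^2N}{\eta_0 n}\right).$$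
   Context: For a positive definite matrix $A$ and $x\in\mathbb{R}^n$, $\|x\|_{A^{-1}}=\sqrt{x^\top A^{-1}x}$. $[t-1]=\{1,\dots,t-1\}$. *)

From HB Require Import structures.
From mathcomp Require Import all_boot all_order all_algebra.
From mathcomp Require Import reals exp.
Set Implicit Arguments. Unset Strict Implicit. Unset Printing Implicit Defensive.
Import Order.TTheory GRing.Theory Num.Theory.
Local Open Scope ring_scope.

Definition norm2 (R : realType) (n : nat) (x : 'cV[R]_n) : R :=
  Num.sqrt (\sum_(i < n) x i 0 ^+ 2).

Definition wnorm_inv (R : realType) (n : nat) (A : 'M[R]_n) (x : 'cV[R]_n) : R :=
  Num.sqrt ((x^T *m invmx A *m x) 0 0).

Definition Amat (R : realType) (n : nat) (eta : nat -> R) (phi : R)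
  (a : nat -> 'cV[R]_n) (t : nat) : 'M[R]_n :=
  eta t *: 1%:M + phi *: \sum_(1 <= tau < t.+1) (a tau *m (a tau)^T).

Definition dmaxN (d : nat -> nat) (N : nat) : nat :=
  (\max_(1 <= tau < N.+1) minn (d tau) (N - tau))%N.

Definition sum_mt (R : realType) (d : nat -> nat) (t : nat) (f : nat -> R) : R :=
  \sum_(1 <= tau < t | (t <= tau + d tau)%N) f tau.

From HB Require Import structures.
From mathcomp Require Import all_boot all_order all_algebra.
From mathcomp Require Import reals exp.
From mathcomp Require Import ring lra zify.
Import Order.TTheory GRing.Theory Num.Theory.
Local Open Scope ring_scope.

Set Implicit Arguments. Unset Strict Implicit. Unset Printing Implicit Defensive.

(** Write [B_t] for the Gram matrix [A_t] with every [eta_t] replaced by [eta_0].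
    Since [A_t] dominates [B_s] for [s <= t], every weighted norm in the sums is
    bounded by the norm in some [B_s^{-1}], and each product
    [||a_t|| * ||a_tau||] with [tau] in [m_t] is at most [(p_t + p_tau) / 2],
    where [p_s = ||a_s||^2] in the corresponding [B^{-1}]-norm.  The pairs
    [(t, tau)] with [tau] in [m_t] lie in a band of width [d_max], so every
    [p_s] is charged at most [d_max] times.  Finally [sum_t phi p_t] is an
    elliptical potential: the matrix determinant lemma bounds each term by the
    increment [ln det B_t - ln det B_(t-1)] (up to the factor
    [1 + phi L^2 / eta_0] when [p_t] is measured in [B_(t-1)]), and the
    telescoped sum [ln det B_N - ln det B_0] is bounded by Hadamard's
    inequality and the AM-GM inequality on the diagonal of [B_N]. *)

Section QuadraticForm.
Variables (R : comPzRingType) (n : nat).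
Implicit Types (M : 'M[R]_n) (u x y : 'cV[R]_n).

Definition qform M x : R := (x^T *m M *m x) 0 0.

Lemma dotmxC x y : (x^T *m y) 0 0 = (y^T *m x) 0 0.
Proof. by rewrite -[x^T *m y]trmxK [LHS]mxE trmx_mul trmxK. Qed.

Lemma qform0 M : qform M 0 = 0.
Proof. by rewrite /qform mulmx0 mxE. Qed.

Lemma qformD M1 M2 x : qform (M1 + M2) x = qform M1 x + qform M2 x.
Proof. by rewrite /qform mulmxDr mulmxDl mxE. Qed.

Lemma qformZ k M x : qform (k *: M) x = k * qform M x.
Proof. by rewrite /qform -scalemxAr -scalemxAl mxE. Qed.

Lemma qform_sum (I : Type) (r : seq I) (P : pred I) (F : I -> 'M[R]_n) x :
  qform (\sum_(i <- r | P i) F i) x = \sum_(i <- r | P i) qform (F i) x.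
Proof. by apply: (big_morph (qform^~ x)) => [M1 M2|]; rewrite ?qformD // /qform mulmx0 mul0mx mxE. Qed.

Lemma qform1 x : qform 1%:M x = \sum_i x i 0 ^+ 2.
Proof. by rewrite /qform mulmx1 mxE; apply: eq_bigr => i _; rewrite mxE expr2. Qed.

Lemma qform_outer u x : qform (u *m u^T) x = (u^T *m x) 0 0 ^+ 2.
Proof. by rewrite /qform !mulmxA -(mulmxA _ u^T) mxE big_ord1 (dotmxC x u) expr2. Qed.

Lemma qform_subr M x y : M^T = M ->
  qform M (x - y) = qform M x + qform M y - 2 * (x^T *m M *m y) 0 0.
Proof.
move=> M_sym; have yMx : (y^T *m M *m x) 0 0 = (x^T *m M *m y) 0 0.
  by rewrite -[y^T *m M *m x]trmxK [LHS]mxE !trmx_mul trmxK M_sym mulmxA.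
rewrite /qform (raddfB (@trmx R n 1)) !mulmxBl !mulmxBr !mxE; move: yMx; rewrite !mxE => ->; ring.
Qed.

End QuadraticForm.

Section UnitRing.
Variable R : comUnitRingType.

Definition schur_compl m n (M : 'M[R]_(m + n)) : 'M[R]_m :=
  ulsubmx M - ursubmx M *m invmx (drsubmx M) *m dlsubmx M.

Lemma det_schur m n (M : 'M[R]_(m + n)) : drsubmx M \in unitmx ->
  \det M = \det (schur_compl M) * \det (drsubmx M).
Proof.
move=> M'_unit; set S := schur_compl M.
have M_fact : M = block_mx 1%:M (ursubmx M *m invmx (drsubmx M)) 0 1%:M
                  *m block_mx S 0 (dlsubmx M) (drsubmx M).
  rewrite mulmx_block !mul1mx !mul0mx ?mulmx0 !add0r ?addr0 -mulmxA mulmxKV //.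
  by rewrite /S mulmxA subrK submxK.
by rewrite {1}M_fact det_mulmx det_ublock det_lblock !det1 !mul1r.
Qed.

Lemma det_1D_mul_tr n (u v : 'cV[R]_n) :
  \det (1%:M + u *m v^T) = 1 + (v^T *m u) 0 0.
Proof.
pose X := block_mx (1%:M : 'M_1) (- v^T) u 1%:M.
have XL : X = block_mx 1%:M 0 u 1%:M *m block_mx 1%:M (- v^T) 0 (1%:M + u *m v^T).
  rewrite mulmx_block !mul1mx !mul0mx ?mulmx0 ?mulmx1 ?addr0 ?add0r.
  by rewrite mulmxN (addrC 1%:M) addKr.
have XU : X = block_mx 1%:M (- v^T) 0 1%:M *m block_mx (1%:M + v^T *m u) 0 u 1%:M.
  rewrite mulmx_block !mul1mx !mul0mx ?mulmx0 ?mulmx1 ?addr0 ?add0r.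
  by rewrite mulNmx addrK.
have := congr1 determinant (etrans (esym XL) XU).
rewrite !det_mulmx det_lblock !det_ublock det_lblock !det1 !mul1r !mulr1 => ->.
by rewrite det_mx11 !mxE.
Qed.

Lemma det_add_outer n (B : 'M[R]_n) (u : 'cV[R]_n) k : B \in unitmx ->
  \det (B + k *: (u *m u^T)) = \det B * (1 + k * qform (invmx B) u).
Proof.
move=> B_unit.
have -> : B + k *: (u *m u^T) = B *m (1%:M + (k *: (invmx B *m u)) *m u^T).
  by rewrite mulmxDr mulmx1 -scalemxAl -scalemxAr !mulmxA mulmxV // mul1mx.
by rewrite det_mulmx det_1D_mul_tr -scalemxAr mxE mulmxA.
Qed.

Lemma qform_invmx n (M : 'M[R]_n) x :
  M \in unitmx -> qform (invmx M) x = qform M (invmx M *m x).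
Proof. by move=> M_unit; rewrite /qform -[in RHS]mulmxA mulKVmx // dotmxC mulmxA. Qed.

Lemma qform_invmx_scalar n (k : R) (x : 'cV[R]_n) :
  qform (invmx k%:M) x = k^-1 * qform 1%:M x.
Proof. by rewrite invmx_scalar -[(k^-1)%:M]scalemx1 qformZ. Qed.

End UnitRing.

Section PositiveDefinite.
Variable R : realFieldType.

Definition posdef n (M : 'M[R]_n) := forall x, x != 0 -> 0 < qform M x.

Lemma posdef_qform_ge0 n (M : 'M[R]_n) x : posdef M -> 0 <= qform M x.
Proof. by move=> M_pd; have [->|/M_pd/ltW//] := eqVneq x 0; rewrite qform0. Qed.

Lemma posdef1 n : posdef (1%:M : 'M[R]_n).
Proof.
move=> x x_neq0; have sqr_ge0' i : 0 <= x i 0 ^+ 2 by exact: sqr_ge0.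
rewrite qform1 lt_def sumr_ge0 ?andbT //; apply: contra x_neq0 => /eqP/psumr_eq0P sum0.
apply/eqP/matrixP => i j; rewrite (ord1 j) mxE.
by apply/eqP; rewrite -sqrf_eq0 sum0.
Qed.

Lemma posdef_diag_gt0 n (M : 'M[R]_n) i : posdef M -> 0 < M i i.
Proof.
move=> M_pd; have e_neq0 : delta_mx i 0 != 0 :> 'cV[R]_n.
  by apply/negP => /eqP/matrixP/(_ i 0)/eqP; rewrite !mxE !eqxx oner_eq0.
by have := M_pd _ e_neq0; rewrite /qform trmx_delta -rowE -colE !mxE.
Qed.

Lemma posdef_drsubmx m n (M : 'M[R]_(m + n)) : posdef M -> posdef (drsubmx M).
Proof.
move=> M_pd x x_neq0; have := M_pd (col_mx 0 x); rewrite col_mx_eq0 eqxx /=.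
rewrite /qform -{1}(submxK M) tr_col_mx mul_row_block mul_row_col trmx0 !mul0mx.
by rewrite !add0r mulmx0 add0r; apply.
Qed.

Lemma posdef_schur n (M : 'M[R]_(1 + n)) : M^T = M -> posdef M ->
  drsubmx M \in unitmx ->
  0 < schur_compl M 0 0 <= ulsubmx M 0 0.
Proof.
move=> M_sym M_pd M'_unit; set z := invmx (drsubmx M) *m dlsubmx M.
have M'z : drsubmx M *m z = dlsubmx M by rewrite mulKVmx.
(* The test vector [(1, -z)] has quadratic form the Schur complement. *)
have x_neq0 : col_mx (1%:M : 'M_1) (- z) != 0.
  rewrite col_mx_eq0 negb_and; apply/orP; left.
  by apply/eqP => /matrixP/(_ 0 0)/eqP; rewrite !mxE eqxx oner_eq0.
apply/andP; split.
  have := M_pd _ x_neq0; rewrite /qform -mulmxA -{1}(submxK M) mul_block_col.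
  rewrite !mulmx1 !mulmxN M'z subrr tr_col_mx mul_row_col mulmx0 addr0 trmx1 mul1mx.
  by rewrite /schur_compl -mulmxA.
have wz_ge0 : 0 <= (ursubmx M *m z) 0 0.
  have := posdef_qform_ge0 z (posdef_drsubmx M_pd).
  by rewrite /qform -mulmxA M'z dotmxC trmx_dlsub M_sym.
by move: wz_ge0; rewrite /schur_compl -mulmxA -/z !mxE lerBlDr lerDl.
Qed.

Lemma posdef_det_le_prod n (M : 'M[R]_n) : M^T = M -> posdef M ->
  0 < \det M <= \prod_i M i i.
Proof.
elim: n M => [|n IH] M; first by rewrite det_mx00 big_ord0 ltr01 lexx.
move: M; rewrite -[n.+1]/(1 + n)%N => M M_sym M_pd.
have M'_sym : (drsubmx M)^T = drsubmx M by rewrite trmx_drsub M_sym.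
have /andP[det'_gt0 det'_le] := IH _ M'_sym (posdef_drsubmx M_pd).
have M'_unit : drsubmx M \in unitmx by rewrite unitmxE unitfE gt_eqF.
have /andP[s_gt0 s_le] := posdef_schur M_sym M_pd M'_unit.
rewrite (det_schur M'_unit) det_mx11 mulr_gt0 //=.
rewrite big_split_ord big_ord1; apply: ler_pM; rewrite ?(ltW s_gt0) ?(ltW det'_gt0) //.
  by move: s_le; rewrite !mxE.
by apply: le_trans det'_le _; under eq_bigr do rewrite !mxE.
Qed.

Lemma posdef_unitmx n (M : 'M[R]_n) : M^T = M -> posdef M -> M \in unitmx.
Proof.
by move=> M_sym M_pd; have /andP[det_gt0 _] := posdef_det_le_prod M_sym M_pd; rewrite unitmxE unitfE gt_eqF.
Qed.

Lemma qform_invmx_ge0 n (M : 'M[R]_n) x : M^T = M -> posdef M -> 0 <= qform (invmx M) x.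
Proof. by move=> M_sym M_pd; rewrite qform_invmx ?posdef_unitmx ?posdef_qform_ge0. Qed.

Lemma qform_invmx_le n (A B : 'M[R]_n) x : B^T = B -> posdef B -> A \in unitmx ->
  (forall y, qform B y <= qform A y) -> qform (invmx A) x <= qform (invmx B) x.
Proof.
move=> B_sym B_pd A_unit BA; have B_unit := posdef_unitmx B_sym B_pd.
(* Expand [0 <= (y - z)^T B (y - z)] with [A y = B z = x]. *)
set y := invmx A *m x; set z := invmx B *m x.
have qA_y : qform A y = qform (invmx A) x by rewrite qform_invmx.
have qB_z : qform B z = qform (invmx B) x by rewrite qform_invmx.
have yBz : (y^T *m B *m z) 0 0 = qform (invmx A) x.
  by rewrite -mulmxA /z mulKVmx // dotmxC /y mulmxA.
have := posdef_qform_ge0 (y - z) B_pd.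
rewrite qform_subr // qB_z yBz; move: (BA y); rewrite qA_y.
move: (qform B y) (qform (invmx A) x) (qform (invmx B) x) => r p q r_le_p expansion_ge0.
have -> : q = (r + q - 2 * p) + (p - r) + p by ring.
by rewrite lerDr addr_ge0 // subr_ge0.
Qed.

End PositiveDefinite.

Section GramMatrix.
Variables (R : realType) (n : nat) (phi : R) (a : nat -> 'cV[R]_n).
Hypothesis phi_ge0 : 0 <= phi.

Lemma qform_Amat eta t x : qform (Amat eta phi a t) x =
  eta t * qform 1%:M x + phi * \sum_(1 <= tau < t.+1) ((a tau)^T *m x) 0 0 ^+ 2.
Proof.
rewrite /Amat qformD !qformZ qform_sum; congr (_ + _ * _).
by apply: eq_bigr => tau _; rewrite qform_outer.
Qed.

Lemma Amat_sym eta t : (Amat eta phi a t)^T = Amat eta phi a t.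
Proof.
rewrite /Amat raddfD /= !linearZ /= tr_scalar_mx raddf_sum /=.
by congr (_ + _ *: _); apply: eq_bigr => tau _; rewrite trmx_mul trmxK.
Qed.

Lemma Amat_posdef eta t : 0 < eta t -> posdef (Amat eta phi a t).
Proof.
move=> eta_gt0 x x_neq0; rewrite qform_Amat ltr_pwDl ?mulr_gt0 ?(posdef1 x_neq0) //.
by rewrite mulr_ge0 // sumr_ge0 // => tau _; exact: sqr_ge0.
Qed.

Lemma qform_Amat_le eta eta' s t x : eta s <= eta' t -> (s <= t)%N ->
  qform (Amat eta phi a s) x <= qform (Amat eta' phi a t) x.
Proof.
move=> eta_le s_le_t; rewrite !qform_Amat lerD ?ler_wpM2r ?ler_wpM2l //.
  by apply: posdef_qform_ge0; exact: posdef1.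
rewrite [X in _ <= X](@big_cat_nat _ _ _ s.+1) //= lerDl.
by rewrite sumr_ge0 // => tau _; exact: sqr_ge0.
Qed.

Lemma qform_invmx_Amat_le eta eta' s t x : 0 < eta s -> eta s <= eta' t -> (s <= t)%N ->
  qform (invmx (Amat eta' phi a t)) x <= qform (invmx (Amat eta phi a s)) x.
Proof.
move=> eta_gt0 eta_le s_le_t; apply: qform_invmx_le.
- exact: Amat_sym.
- exact: Amat_posdef.
- exact: posdef_unitmx (Amat_sym _ _) (Amat_posdef (lt_le_trans eta_gt0 eta_le)).
- by move=> y; exact: qform_Amat_le.
Qed.

Lemma mxtrace_Amat eta t : \tr (Amat eta phi a t) =
  eta t * n%:R + phi * \sum_(1 <= tau < t.+1) qform 1%:M (a tau).
Proof.
rewrite /Amat mxtraceD !mxtraceZ mxtrace1 raddf_sum; congr (_ + _ * _).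
by apply: eq_bigr => tau _ /=; rewrite mxtrace_mulC trace_mx11 /qform mulmx1.
Qed.

Lemma Amat_const0 e : Amat (fun=> e) phi a 0 = e%:M.
Proof. by rewrite /Amat big_geq // scaler0 addr0 scalemx1. Qed.

Lemma Amat_constS e t :
  Amat (fun=> e) phi a t.+1 = Amat (fun=> e) phi a t + phi *: (a t.+1 *m (a t.+1)^T).
Proof. by rewrite /Amat big_nat_recr //= scalerDr addrA. Qed.

End GramMatrix.

Lemma count_in_window_le lo hi a D (P : pred nat) :
  (forall i, (lo <= i < hi)%N -> P i -> (a <= i < a + D)%N) ->
  (count P (index_iota lo hi) <= D)%N.
Proof.
move=> in_window; rewrite -size_filter -[X in (_ <= X)%N](size_iota a D).
apply: uniq_leq_size; first by rewrite filter_uniq ?iota_uniq.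
move=> i; rewrite mem_filter mem_index_iota => /andP[Pi i_range].
by rewrite mem_iota; exact: in_window.
Qed.

Lemma sum_const_in_window_le (R : numDomainType) (c : R) lo hi a D (P : pred nat) : 0 <= c ->
  (forall i, (lo <= i < hi)%N -> P i -> (a <= i < a + D)%N) ->
  \sum_(lo <= i < hi | P i) c <= c * D%:R.
Proof.
move=> c_ge0 in_window; rewrite big_const_seq iter_addr_0 -[X in X <= _]mulr_natr.
by apply: ler_wpM2l => //; rewrite ler_nat; exact: count_in_window_le in_window.
Qed.

Lemma mul_le_half_add (R : realFieldType) (u v p q : R) :
  u ^+ 2 <= p -> v ^+ 2 <= q -> u * v <= p / 2 + q / 2.
Proof. by move=> up vq; have := sqr_ge0 (u - v); rewrite sqrrB mulr2n; lra. Qed.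

Lemma delayed_sum_le (R : realType) N (d : nat -> nat) D (u p : nat -> R)
    (v : nat -> nat -> R) :
  (forall tau, (1 <= tau <= N)%N -> (minn (d tau) (N - tau) <= D)%N) ->
  (forall t, (1 <= t <= N)%N -> u t ^+ 2 <= p t) ->
  (forall t tau, (1 <= tau < t)%N -> (t <= N)%N -> v t tau ^+ 2 <= p tau) ->
  (forall t, (1 <= t <= N)%N -> 0 <= p t) ->
  \sum_(1 <= t < N.+1) u t * sum_mt d t (v t) <= D%:R * \sum_(1 <= t < N.+1) p t.
Proof.
move=> d_le u_le v_le p_ge0.
pose C t tau := (t <= tau + d tau)%N && (tau < t)%N.
apply: (@le_trans _ _ (\sum_(1 <= t < N.+1) \sum_(1 <= tau < N.+1 | C t tau)
                          (p t / 2 + p tau / 2))).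
  apply: ler_sum_nat => t /andP[t_ge1 t_le]; rewrite /sum_mt mulr_sumr.
  rewrite (big_nat_widen _ _ _ _ _ (ltnW t_le)) big_nat_cond [X in _ <= X]big_nat_cond.
  apply: ler_sum => tau /andP[/andP[tau_ge1 _] /andP[_ tau_lt_t]].
  by apply: mul_le_half_add; [apply: u_le | apply: v_le]; lia.
(* For fixed [t] the indices [tau] with [C t tau] lie in [[t - D, t)], and for
   fixed [tau] the indices [t] lie in [(tau, tau + D]]. *)
under eq_bigr do rewrite big_split; rewrite big_split /= [X in _ + X](exchange_big_dep_nat xpredT) //=.
have p_half_ge0 t : (1 <= t <= N)%N -> 0 <= p t / 2 by move/p_ge0; lra.
apply: (@le_trans _ _ (\sum_(1 <= t < N.+1) (p t / 2 * D%:R) + \sum_(1 <= t < N.+1) (p t / 2 * D%:R))).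
  apply: lerD; apply: ler_sum_nat => t /andP[t_ge1 t_le].
    apply: (sum_const_in_window_le (a := t - D)); first by apply: p_half_ge0; lia.
    by move=> tau tau_range /andP[t_le_d tau_lt_t]; have := d_le tau; lia.
  apply: (sum_const_in_window_le (a := t.+1)); first by apply: p_half_ge0; lia.
  by move=> s s_range /andP[s_le_d t_lt_s]; have := d_le t; lia.
by rewrite -big_split /= mulr_sumr; apply: ler_sum => t _; rewrite mulrC -mulrDr -splitr.
Qed.

Section Logarithm.
Variable R : realType.

Lemma ln_prod (I : Type) (r : seq I) (F : I -> R) :
  (forall i, 0 < F i) -> ln (\prod_(i <- r) F i) = \sum_(i <- r) ln (F i).
Proof.
move=> F_gt0; elim: r => [|i r IH]; first by rewrite !big_nil ln1.
by rewrite !big_cons lnM ?IH ?posrE ?F_gt0 ?prodr_gt0.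
Qed.

Lemma ln1Dx_ge_div (x : R) : 0 <= x -> x / (1 + x) <= ln (1 + x).
Proof.
move=> x_ge0; have x1_gt0 : 0 < 1 + x by lra.
have y_gt : -1 < - (x / (1 + x)).
  by rewrite ltrN2 ltr_pdivrMr // mul1r; lra.
have := le_ln1Dx y_gt.
have -> : 1 - x / (1 + x) = (1 + x)^-1 by field; rewrite gt_eqF.
by rewrite lnV ?posrE // lerN2.
Qed.

Lemma sum_ln_le_ln_mean (I : finType) (b : I -> R) : (0 < #|I|)%N ->
  (forall i, 0 < b i) -> \sum_i ln (b i) <= #|I|%:R * ln ((\sum_i b i) / #|I|%:R).
Proof.
move=> I_gt0 b_gt0; set k : R := #|I|%:R; set m := (\sum_i b i) / k.
have k_gt0 : 0 < k by rewrite ltr0n.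
have [i0 _] := card_gt0P I_gt0.
have sum_gt0 : 0 < \sum_i b i.
  by rewrite (bigD1 i0) //= ltr_pwDl // sumr_ge0 // => i _; exact/ltW.
have m_gt0 : 0 < m by rewrite divr_gt0.
(* The tangent line of the concave [ln] at the mean [m]. *)
have ln_le i : ln (b i) <= ln m + (b i / m - 1).
  have := @le_ln1Dx _ (b i / m - 1); rewrite addrCA subrr addr0 ln_div ?posrE //.
  move=> ln_le1; rewrite -lerBlDl; apply: ln_le1.
  by rewrite -subr_gt0 opprK subrK divr_gt0.
apply: le_trans (ler_sum _ (fun i _ => ln_le i)) _.
rewrite !big_split /= !sumr_const -mulr_suml.
have -> : (\sum_i b i) / m = k by rewrite /m invf_div mulrC divfK ?gt_eqF.
by rewrite mulNrn addrN addr0 -mulr_natl.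
Qed.

End Logarithm.

Lemma ln_det_le_trace (R : realType) n (M : 'M[R]_n) : (0 < n)%N ->
  M^T = M -> posdef M -> ln (\det M) <= n%:R * ln (\tr M / n%:R).
Proof.
move=> n_gt0 M_sym M_pd; have /andP[det_gt0 det_le] := posdef_det_le_prod M_sym M_pd.
have diag_gt0 i : 0 < M i i by exact: posdef_diag_gt0.
rewrite -[n in n%:R]card_ord; apply: le_trans (sum_ln_le_ln_mean _ _) => //.
  by rewrite -ln_prod // ler_ln ?posrE ?prodr_gt0.
by rewrite card_ord.
Qed.

Section EllipticalPotential.
Variables (R : realType) (n : nat) (e phi : R) (a : nat -> 'cV[R]_n).
Hypotheses (e_gt0 : 0 < e) (phi_gt0 : 0 < phi).

Let B := Amat (fun=> e) phi a.

Let B_posdef t : posdef (B t).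
Proof. by apply: Amat_posdef => //; exact: ltW. Qed.

Let B_unit t : B t \in unitmx.
Proof. exact: posdef_unitmx (Amat_sym _ _ _ _) (B_posdef t). Qed.

Let det_B_gt0 t : 0 < \det (B t).
Proof. by have /andP[] := posdef_det_le_prod (Amat_sym _ _ _ _) (B_posdef t). Qed.

Lemma det_Amat_constS t :
  \det (B t.+1) = \det (B t) * (1 + phi * qform (invmx (B t)) (a t.+1)).
Proof. by rewrite /B Amat_constS det_add_outer. Qed.

Lemma det_Amat_const_pred t :
  \det (B t) = \det (B t.+1) * (1 - phi * qform (invmx (B t.+1)) (a t.+1)).
Proof. by rewrite -mulNr -det_add_outer // /B Amat_constS scaleNr addrK. Qed.

Lemma qform_le_logdet_increment t :
  phi * qform (invmx (B t.+1)) (a t.+1) <= ln (\det (B t.+1)) - ln (\det (B t)).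
Proof.
set y := phi * _.
have y_lt1 : 0 < 1 - y.
  by have := det_B_gt0 t; rewrite (det_Amat_const_pred t) pmulr_rgt0.
rewrite [X in _ - ln X](det_Amat_const_pred t) lnM ?posrE // opprD addrA subrr add0r.
by rewrite lerNr; apply: le_ln1Dx; rewrite -subr_gt0 opprK addrC.
Qed.

Lemma qform_prev_le_logdet_increment c t :
  phi * qform (invmx (B t)) (a t.+1) <= c ->
  phi * qform (invmx (B t)) (a t.+1) <= (1 + c) * (ln (\det (B t.+1)) - ln (\det (B t))).
Proof.
set x := phi * _ => x_le_c.
have x_ge0 : 0 <= x.
  exact: mulr_ge0 (ltW phi_gt0) (qform_invmx_ge0 _ (Amat_sym _ _ _ _) (B_posdef t)).
have x1_gt0 : 0 < 1 + x by lra.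
rewrite (det_Amat_constS t) lnM ?posrE // [ln _ + _]addrC addrK.
have x_le : x <= (1 + x) * ln (1 + x).
  by rewrite -ler_pdivrMl // mulrC; exact: ln1Dx_ge_div.
apply: le_trans x_le _; apply: ler_wpM2r; last by lra.
by apply: ln_ge0; lra.
Qed.

Lemma sum_qform_le_logdet N :
  \sum_(1 <= t < N.+1) phi * qform (invmx (B t)) (a t)
    <= ln (\det (B N)) - ln (\det (B 0)).
Proof.
rewrite -(telescope_sumr (fun t => ln (\det (B t))) (leq0n N)) big_add1 /=.
by apply: ler_sum_nat => t _; exact: qform_le_logdet_increment.
Qed.

Lemma sum_qform_prev_le_logdet N c :
  (forall t, (t < N)%N -> phi * qform (invmx (B t)) (a t.+1) <= c) ->
  \sum_(1 <= t < N.+1) phi * qform (invmx (B t.-1)) (a t)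
    <= (1 + c) * (ln (\det (B N)) - ln (\det (B 0))).
Proof.
move=> c_bound; rewrite -(telescope_sumr (fun t => ln (\det (B t))) (leq0n N)).
rewrite mulr_sumr big_add1 /=; apply: ler_sum_nat => t /andP[_ t_lt_N].
exact/qform_prev_le_logdet_increment/c_bound.
Qed.

Lemma logdet_Amat_const_le N L : (0 < n)%N ->
  (forall t, (1 <= t <= N)%N -> qform 1%:M (a t) <= L ^+ 2) ->
  ln (\det (B N)) - ln (\det (B 0))
    <= n%:R * ln (1 + phi * L ^+ 2 * N%:R / (e * n%:R)).
Proof.
move=> n_gt0 a_le; have n_gt0' : 0 < n%:R :> R by rewrite ltr0n.
have tr_le : \tr (B N) <= e * n%:R + phi * (L ^+ 2 * N%:R).
  rewrite mxtrace_Amat lerD2l; apply: ler_wpM2l; first exact: ltW.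
  apply: le_trans (_ : _ <= \sum_(1 <= t < N.+1) L ^+ 2) _; first exact: ler_sum_nat.
  by rewrite sumr_const_nat subn1 mulr_natr.
have tr_gt0 : 0 < \tr (B N).
  rewrite mxtrace_Amat; apply: (@lt_le_trans _ _ (e * n%:R)); first exact: mulr_gt0.
  rewrite lerDl mulr_ge0 ?(ltW phi_gt0) // sumr_ge0 // => t _.
  by apply: posdef_qform_ge0; exact: posdef1.
have [det_gt0 _] := andP (posdef_det_le_prod (Amat_sym _ _ _ N) (B_posdef N)).
rewrite /B Amat_const0 det_scalar lnXn // -[ln e *+ n]mulr_natl -/(B N).
apply: le_trans (_ : n%:R * ln (\tr (B N) / n%:R) - n%:R * ln e <= _).
  by rewrite lerD2r; exact: ln_det_le_trace (Amat_sym _ _ _ N) (B_posdef N).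
rewrite -mulrBr -ln_div ?posrE ?divr_gt0 //; apply: ler_wpM2l => //.
have -> : 1 + phi * L ^+ 2 * N%:R / (e * n%:R)
          = (e * n%:R + phi * (L ^+ 2 * N%:R)) / n%:R / e.
  by field; rewrite !gt_eqF.
rewrite ler_ln ?posrE ?divr_gt0 ?(lt_le_trans tr_gt0 tr_le) //.
by rewrite !ler_pM2r ?invr_gt0.
Qed.

End EllipticalPotential.

Lemma qform1_le_sqr (R : realType) n (x : 'cV[R]_n) L :
  norm2 x <= L -> qform 1%:M x <= L ^+ 2.
Proof.
rewrite /norm2 -qform1 => norm_le; have qform_ge0 : 0 <= qform 1%:M x.
  by apply: posdef_qform_ge0; exact: posdef1.
by rewrite -(sqr_sqrtr qform_ge0) !expr2 ler_pM ?sqrtr_ge0.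
Qed.

Lemma leq_dmaxN (d : nat -> nat) N tau : (1 <= tau <= N)%N ->
  (minn (d tau) (N - tau) <= dmaxN d N)%N.
Proof.
move=> tau_range; rewrite /dmaxN.
by apply: (@leq_bigmax_seq _ _ xpredT (fun tau => minn (d tau) (N - tau))); rewrite // mem_index_iota.
Qed.

Section DelayedFeedback.
Variables (R : realType) (N n : nat) (phi L : R) (eta : nat -> R)
  (a : nat -> 'cV[R]_n) (d : nat -> nat).
Hypotheses (n_gt0 : (0 < n)%N) (phi_gt0 : 0 < phi) (eta0_gt0 : 0 < eta 0)
  (eta_nondecr : forall t, (t < N)%N -> eta t <= eta t.+1)
  (a_le : forall t, (1 <= t <= N)%N -> norm2 (a t) <= L).

Let A := Amat eta phi a.
Let B := Amat (fun=> eta 0) phi a.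
Let lg := ln (1 + phi * L ^+ 2 * N%:R / (eta 0 * n%:R)).

Let eta0_le t : (t <= N)%N -> eta 0 <= eta t.
Proof. by elim: t => [|t IH] t_le //; apply: le_trans (IH (ltnW t_le)) (eta_nondecr t_le). Qed.

Let qform1_a_le t : (1 <= t <= N)%N -> qform 1%:M (a t) <= L ^+ 2.
Proof. by move/a_le; exact: qform1_le_sqr. Qed.

Lemma sum_qform_Amat_const_le :
  \sum_(1 <= t < N.+1) qform (invmx (B t)) (a t) <= n%:R * lg / phi.
Proof.
rewrite ler_pdivlMr // mulrC mulr_sumr.
exact: le_trans (sum_qform_le_logdet _ _ _ _) (logdet_Amat_const_le _ _ _ _).
Qed.

Lemma sum_qform_Amat_const_prev_le :
  \sum_(1 <= t < N.+1) qform (invmx (B t.-1)) (a t)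
    <= (phi * L ^+ 2 / eta 0 + 1) * (n%:R * lg) / phi.
Proof.
have c_bound t : (t < N)%N ->
    phi * qform (invmx (B t)) (a t.+1) <= phi * L ^+ 2 / eta 0.
  move=> t_lt_N; apply: le_trans (_ : _ <= phi * qform (invmx (B 0)) (a t.+1)) _.
    by apply: ler_wpM2l; [exact: ltW | apply: qform_invmx_Amat_le => //; exact: ltW].
  rewrite /B Amat_const0 qform_invmx_scalar mulrCA [X in _ <= X]mulrC.
  apply: ler_wpM2l; first by rewrite invr_ge0 ltW.
  by apply: ler_wpM2l; [exact: ltW | apply: qform1_a_le; lia].
rewrite ler_pdivlMr // mulrC mulr_sumr addrC.
apply: le_trans (sum_qform_prev_le_logdet eta0_gt0 phi_gt0 c_bound) _.
apply: ler_wpM2l (logdet_Amat_const_le eta0_gt0 phi_gt0 n_gt0 qform1_a_le).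
by rewrite addr_ge0 ?ler01 // divr_ge0 ?(ltW eta0_gt0) // mulr_ge0 ?(ltW phi_gt0) ?sqr_ge0.
Qed.

Lemma wnorm_inv_sqr_le s t x : (s <= t <= N)%N ->
  wnorm_inv (A t) x ^+ 2 <= qform (invmx (B s)) x.
Proof.
move=> /andP[s_le_t t_le_N]; have eta_gt0 := lt_le_trans eta0_gt0 (eta0_le t_le_N).
rewrite /wnorm_inv -/(qform (invmx (A t)) x) sqr_sqrtr; last first.
  exact: qform_invmx_ge0 _ (Amat_sym _ _ _ _) (Amat_posdef _ (ltW phi_gt0) eta_gt0).
by apply: qform_invmx_Amat_le => //; [exact: ltW | exact: eta0_le].
Qed.

Lemma sum_wnorm_delayed_le (sh : nat -> nat) : (forall t, (sh t <= t <= (sh t).+1)%N) ->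
  \sum_(1 <= t < N.+1)
      wnorm_inv (A (sh t)) (a t) * sum_mt d t (fun tau => wnorm_inv (A (sh t)) (a tau))
    <= (dmaxN d N)%:R * \sum_(1 <= t < N.+1) qform (invmx (B (sh t))) (a t).
Proof.
move=> sh_near; apply: delayed_sum_le => [tau|t t_range|t tau tau_range t_le_N|t _].
- exact: leq_dmaxN.
- by apply: wnorm_inv_sqr_le; have := sh_near t; lia.
- by apply: wnorm_inv_sqr_le; have := sh_near t; have := sh_near tau; lia.
- exact: qform_invmx_ge0 _ (Amat_sym _ _ _ _) (Amat_posdef _ (ltW phi_gt0) eta0_gt0).
Qed.

Let D := (dmaxN d N)%:R : R.

Let dmax_mul_le (S X : R) : S <= X -> 0 <= X -> D * S <= 2 * (D * X).
Proof.
move=> S_le_X X_ge0; have D_ge0 : 0 <= D by exact: ler0n.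
by have := ler_wpM2l D_ge0 S_le_X; have := mulr_ge0 D_ge0 X_ge0; lra.
Qed.

Let lg_ge0 : 0 <= lg.
Proof.
apply: ln_ge0; rewrite lerDl; apply: divr_ge0.
  exact: mulr_ge0 (mulr_ge0 (ltW phi_gt0) (sqr_ge0 L)) (ler0n _ N).
exact: mulr_ge0 (ltW eta0_gt0) (ler0n _ n).
Qed.

Lemma delayed_potential_prev_le :
  \sum_(1 <= t < N.+1)
      wnorm_inv (A t.-1) (a t) * sum_mt d t (fun tau => wnorm_inv (A t.-1) (a tau))
    <= 2 * n%:R * D / phi * (phi * L ^+ 2 / eta 0 + 1) * lg.
Proof.
apply: le_trans (sum_wnorm_delayed_le (sh := predn) _) _ => [t|]; first by lia.
have -> : 2 * n%:R * D / phi * (phi * L ^+ 2 / eta 0 + 1) * lg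
          = 2 * (D * ((phi * L ^+ 2 / eta 0 + 1) * (n%:R * lg) / phi)).
  by field; rewrite !gt_eqF.
have c_ge0 : 0 <= phi * L ^+ 2 / eta 0.
  exact: divr_ge0 (mulr_ge0 (ltW phi_gt0) (sqr_ge0 L)) (ltW eta0_gt0).
apply: dmax_mul_le sum_qform_Amat_const_prev_le _.
by rewrite divr_ge0 ?(ltW phi_gt0) // mulr_ge0 ?addr_ge0 ?ler01 // mulr_ge0 ?ler0n.
Qed.

Lemma delayed_potential_le :
  \sum_(1 <= t < N.+1)
      wnorm_inv (A t) (a t) * sum_mt d t (fun tau => wnorm_inv (A t) (a tau))
    <= 2 * n%:R * D / phi * lg.
Proof.
apply: le_trans (sum_wnorm_delayed_le (sh := id) _) _ => [t|]; first by lia.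
have -> : 2 * n%:R * D / phi * lg = 2 * (D * (n%:R * lg / phi)).
  by field; rewrite gt_eqF.
apply: dmax_mul_le sum_qform_Amat_const_le _.
by rewrite divr_ge0 ?(ltW phi_gt0) // mulr_ge0 ?ler0n.
Qed.

End DelayedFeedback.

Unset Implicit Arguments.

Theorem lemmaC1 (R : realType) (N n : nat) (phi L : R) (eta : nat -> R)
  (a : nat -> 'cV[R]_n) (d : nat -> nat) :
  (1 <= N)%N -> (1 <= n)%N -> 0 < phi -> 0 < L -> 0 < eta 0%N ->
  (forall t, (t < N)%N -> eta t <= eta t.+1) ->
  (forall t, (1 <= t <= N)%N -> norm2 (a t) <= L) ->
  let A := Amat eta phi a in
  let D := (dmaxN d N)%:R : R in
  let lg := ln (1 + phi * L ^+ 2 * N%:R / (eta 0%N * n%:R)) in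
  (\sum_(1 <= t < N.+1)
      wnorm_inv (A t.-1) (a t) * sum_mt d t (fun tau => wnorm_inv (A t.-1) (a tau))
    <= 2 * n%:R * D / phi * (phi * L ^+ 2 / eta 0%N + 1) * lg)
  /\
  (\sum_(1 <= t < N.+1)
      wnorm_inv (A t) (a t) * sum_mt d t (fun tau => wnorm_inv (A t) (a tau))
    <= 2 * n%:R * D / phi * lg).
Proof.
move=> _ n_gt0 phi_gt0 _ eta0_gt0 eta_nondecr a_le.
split; first exact: delayed_potential_prev_le.
exact: delayed_potential_le.
Qed.
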